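(* Let $\mu^*=\max_{p\in(0,1]}\frac{p}{w_-(p)}$. Then $\mu^*>1$, and there exists a unique $p^*\in(0,1)$ such that $\mu^*w_-(p^* )=p^*$.
   Context: $w_-:[0,1]\to[0,1]$ is strictly increasing, thrice differentiable, with $w_-(0)=0$, $w_-(1)=1$, $w_-'(0)>1$, $w_-'(1)>1$ and $w_-'''(p)>0$ for all $p$ (so $w_-$ is strictly concave then strictly convex). *)

From Stdlib Require Import Reals.
From Coquelicot Require Import Coquelicot.
Open Scope R_scope.

Definition is_max_ratio (w : R -> R) (mu : R) : Prop :=
  (exists p, 0 < p <= 1 /\ p / w p = mu) /\
  (forall p, 0 < p <= 1 -> p / w p <= mu).

(** The ratio p / w p is below 1 near 0 (as w'(0) > 1) and above 1 just below
    p = 1 (as w'(1) > 1); being continuous on (0,1] it attains a maximum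
    mu > 1, at some p0 < 1.  Then g := mu w - id is nonnegative on [0,1] and
    vanishes at 0 and p0.  A second zero q in (p0,1), say, would make g'
    vanish at p0 (an interior minimum of g) and, by Rolle, somewhere in (0,p0)
    and in (p0,q); two more applications of Rolle then give a zero of
    g''' = mu w''' > 0. *)

From Stdlib Require Import Reals Lra.
From Coquelicot Require Import Coquelicot.
Open Scope R_scope.

Lemma is_derive_slope_gt (f : R -> R) (a l k : R) :
  is_derive f a l -> k < l ->
  exists d, 0 < d /\ forall h, h <> 0 -> Rabs h < d -> k < (f (a + h) - f a) / h.
Proof.
  intros Hd Hk. apply is_derive_Reals in Hd.
  destruct (Hd (l - k) ltac:(lra)) as [d Hd'].
  exists d. split; [apply cond_pos|].
  intros h Hh0 Hh. specialize (Hd' h Hh0 Hh). apply Rabs_def2 in Hd'. lra.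
Qed.

Lemma is_derive_interior_min (f : R -> R) (a l r : R) :
  is_derive f a l -> 0 < r ->
  (forall x, a - r < x -> x < a + r -> f a <= f x) -> l = 0.
Proof.
  intros Hd Hr Hmin. apply is_derive_Reals in Hd.
  exact (deriv_minimum f (a - r) (a + r) a (exist _ l Hd) ltac:(lra) ltac:(lra) Hmin).
Qed.

Lemma rolle_is_derive (f f' : R -> R) (a b : R) :
  a < b -> (forall x, a <= x <= b -> is_derive f x (f' x)) -> f a = f b ->
  exists c, a < c < b /\ f' c = 0.
Proof.
  intros Hab Hd Heq.
  destruct (MVT_cor2 f f' a b Hab) as [c [Hc Hin]].
  { intros x Hx. apply is_derive_Reals, Hd, Hx. }
  exists c. split; [exact Hin|]. rewrite Heq in Hc. nra.
Qed.

Lemma continuity_max_on_Ioc (f : R -> R) (d : R) :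
  0 < d <= 1 ->
  (forall p, d <= p <= 1 -> continuity_pt f p) ->
  (forall p, 0 < p < d -> f p <= f 1) ->
  exists m, 0 < m <= 1 /\ forall p, 0 < p <= 1 -> f p <= f m.
Proof.
  intros Hd Hc Hsmall.
  destruct (continuity_ab_maj f d 1 ltac:(lra) Hc) as [m [Hm Hmd]].
  exists m. split; [lra|]. intros p Hp.
  destruct (Rlt_le_dec p d).
  - apply Rle_trans with (f 1); [apply Hsmall | apply Hm]; lra.
  - apply Hm; lra.
Qed.

Section PositiveThirdDerivative.

Variables g g1 g2 g3 : R -> R.
Hypothesis Dg : forall x, 0 <= x <= 1 -> is_derive g x (g1 x).
Hypothesis Dg1 : forall x, 0 <= x <= 1 -> is_derive g1 x (g2 x).
Hypothesis Dg2 : forall x, 0 <= x <= 1 -> is_derive g2 x (g3 x).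
Hypothesis g3_pos : forall x, 0 <= x <= 1 -> 0 < g3 x.

Lemma deriv_no_three_zeros x y z :
  0 <= x -> x < y -> y < z -> z <= 1 ->
  g1 x = 0 -> g1 y = 0 -> g1 z = 0 -> False.
Proof.
  intros Hx Hxy Hyz Hz Ex Ey Ez.
  destruct (rolle_is_derive g1 g2 x y) as [e1 [He1 E1]];
    [lra | intros; apply Dg1; lra | congruence |].
  destruct (rolle_is_derive g1 g2 y z) as [e2 [He2 E2]];
    [lra | intros; apply Dg1; lra | congruence |].
  destruct (rolle_is_derive g2 g3 e1 e2) as [e [He E]];
    [lra | intros; apply Dg2; lra | congruence |].
  specialize (g3_pos e). lra.
Qed.

Lemma nonneg_interior_zero_unique :
  g 0 = 0 -> (forall x, 0 < x < 1 -> 0 <= g x) ->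
  forall a b, 0 < a < 1 -> 0 < b < 1 -> g a = 0 -> g b = 0 -> a = b.
Proof.
  intros G0 Gnonneg.
  assert (Hlt : forall a b, 0 < a -> a < b -> b < 1 -> g a = 0 -> g b = 0 -> False).
  { intros a b Ha Hab Hb Ga Gb.
    assert (Crit : g1 a = 0).
    { assert (Rmin a (1 - a) <= a) by apply Rmin_l.
      assert (Rmin a (1 - a) <= 1 - a) by apply Rmin_r.
      apply (is_derive_interior_min g a (g1 a) (Rmin a (1 - a)));
        [apply Dg; lra | apply Rmin_pos; lra |].
      intros x Hx1 Hx2. rewrite Ga. apply Gnonneg. lra. }
    destruct (rolle_is_derive g g1 0 a) as [c [Hc Ec]];
      [lra | intros; apply Dg; lra | congruence |].
    destruct (rolle_is_derive g g1 a b) as [d [Hd Ed]];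
      [lra | intros; apply Dg; lra | congruence |].
    apply (deriv_no_three_zeros c a d); lra. }
  intros a b Ha Hb Ga Gb.
  destruct (Rtotal_order a b) as [L | [E | L]]; [| exact E |];
    exfalso; [apply (Hlt a b) | apply (Hlt b a)]; lra.
Qed.

End PositiveThirdDerivative.

Lemma ratio_lt_1_near_0 (w : R -> R) (l : R) :
  w 0 = 0 -> is_derive w 0 l -> 1 < l ->
  exists d, 0 < d <= 1 /\ forall p, 0 < p < d -> p / w p < 1.
Proof.
  intros Hw0 Hd Hl.
  destruct (is_derive_slope_gt w 0 l 1 Hd Hl) as [d [Hd0 Hslope]].
  assert (Rmin d 1 <= d) by apply Rmin_l.
  assert (Rmin d 1 <= 1) by apply Rmin_r.
  exists (Rmin d 1). split; [split; [apply Rmin_pos|]; lra|].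
  intros p Hp.
  specialize (Hslope p ltac:(lra) ltac:(rewrite Rabs_pos_eq; lra)).
  rewrite Rplus_0_l, Hw0, Rminus_0_r in Hslope.
  apply Rlt_div_r in Hslope; [|lra].
  apply (Rdiv_lt_1 p (w p)); lra.
Qed.

Lemma ratio_gt_1_near_1 (w : R -> R) (l : R) :
  w 1 = 1 -> is_derive w 1 l -> 1 < l ->
  (forall p, 0 < p < 1 -> 0 < w p) ->
  exists p, 0 < p < 1 /\ 1 < p / w p.
Proof.
  intros Hw1 Hd Hl Hpos.
  destruct (is_derive_slope_gt w 1 l 1 Hd Hl) as [d [Hd0 Hslope]].
  assert (Rmin d 1 <= d) by apply Rmin_l.
  assert (Rmin d 1 <= 1) by apply Rmin_r.
  assert (0 < Rmin d 1) by (apply Rmin_pos; lra).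
  set (t := Rmin d 1 / 2).
  specialize (Hslope (- t) ltac:(unfold t; lra)
                ltac:(rewrite Rabs_Ropp, Rabs_pos_eq; unfold t; lra)).
  replace (1 + - t) with (1 - t) in Hslope by ring.
  rewrite Hw1 in Hslope.
  assert (Hbelow : w (1 - t) < 1 - t).
  { set (q := (w (1 - t) - 1) / - t) in Hslope.
    assert (q * - t = w (1 - t) - 1) by (unfold q; field; unfold t; lra).
    unfold t in *. nra. }
  exists (1 - t). split; [unfold t; lra|].
  apply Rlt_div_r; [apply Hpos; unfold t; lra | lra].
Qed.

Section WeightingFunction.

Variables w w1 w2 w3 : R -> R.
Hypothesis w_pos : forall p, 0 < p <= 1 -> 0 < w p.
Hypothesis w0 : w 0 = 0.
Hypothesis w1_eq1 : w 1 = 1.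
Hypothesis Dw : forall x, 0 <= x <= 1 -> is_derive w x (w1 x).
Hypothesis Dw1 : forall x, 0 <= x <= 1 -> is_derive w1 x (w2 x).
Hypothesis Dw2 : forall x, 0 <= x <= 1 -> is_derive w2 x (w3 x).
Hypothesis w1_0_gt1 : w1 0 > 1.
Hypothesis w1_1_gt1 : w1 1 > 1.
Hypothesis w3_pos : forall x, 0 <= x <= 1 -> w3 x > 0.

Lemma max_ratio_exists : exists mu, is_max_ratio w mu.
Proof.
  destruct (ratio_lt_1_near_0 w (w1 0) w0 (Dw 0 ltac:(lra)) w1_0_gt1) as [d [Hd Hsmall]].
  destruct (continuity_max_on_Ioc (fun p => p / w p) d Hd) as [m [Hm Hmax]].
  - intros p Hp. apply continuity_pt_div.
    + apply derivable_continuous_pt, derivable_pt_id.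
    + apply derivable_continuous_pt. exists (w1 p). apply is_derive_Reals, Dw. lra.
    + apply Rgt_not_eq, w_pos. lra.
  - intros p Hp. specialize (Hsmall p Hp). simpl. rewrite w1_eq1, Rdiv_1_r. lra.
  - exists (m / w m). split; [exists m; auto | exact Hmax].
Qed.

Lemma max_ratio_gt_1 mu : is_max_ratio w mu -> mu > 1.
Proof.
  intros [_ Hub].
  destruct (ratio_gt_1_near_1 w (w1 1) w1_eq1 (Dw 1 ltac:(lra)) w1_1_gt1) as [p [Hp Hgt]].
  - intros p Hp. apply w_pos. lra.
  - specialize (Hub p ltac:(lra)). lra.
Qed.

Lemma max_ratio_fixed_point_exists mu :
  is_max_ratio w mu -> exists p, 0 < p < 1 /\ mu * w p = p.
Proof.
  intros Hmax.
  pose proof (max_ratio_gt_1 mu Hmax) as Hmu.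
  destruct Hmax as [[p [Hp Hratio]] _].
  assert (p <> 1) by (intros ->; rewrite w1_eq1, Rdiv_1_r in Hratio; lra).
  assert (0 < w p) by (apply w_pos; lra).
  exists p. split; [lra|]. rewrite <- Hratio. field. lra.
Qed.

Lemma max_ratio_fixed_point_unique mu p q :
  is_max_ratio w mu -> 0 < p < 1 -> 0 < q < 1 -> mu * w p = p -> mu * w q = q -> p = q.
Proof.
  intros Hmax Hp Hq Ep Eq.
  assert (Hmu : mu > 1) by exact (max_ratio_gt_1 mu Hmax).
  destruct Hmax as [_ Hub].
  apply (nonneg_interior_zero_unique (fun x => mu * w x - x) (fun x => mu * w1 x - 1)
           (fun x => mu * w2 x) (fun x => mu * w3 x)).
  - intros x Hx.
    exact (is_derive_minus (fun t => mu * w t) (fun t => t) x _ _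
             (is_derive_scal w x mu _ (Dw x Hx)) (is_derive_id x)).
  - intros x Hx. replace (mu * w2 x) with (mu * w2 x - 0) by ring.
    exact (is_derive_minus (fun t => mu * w1 t) (fun _ => 1) x _ _
             (is_derive_scal w1 x mu _ (Dw1 x Hx)) (is_derive_const 1 x)).
  - intros x Hx. apply is_derive_scal, Dw2, Hx.
  - intros x Hx. specialize (w3_pos x Hx). nra.
  - rewrite w0. ring.
  - intros x Hx. specialize (Hub x ltac:(lra)).
    apply Rle_div_l in Hub; [lra | apply w_pos; lra].
  - exact Hp.
  - exact Hq.
  - lra.
  - lra.
Qed.

End WeightingFunction.

Theorem lemma1 (w w1 w2 w3 : R -> R)
  (Hincr : forall x y, 0 <= x -> x < y -> y <= 1 -> w x < w y)
  (Hw0 : w 0 = 0) (Hw1 : w 1 = 1)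
  (Hd1 : forall x, 0 <= x <= 1 -> is_derive w x (w1 x))
  (Hd2 : forall x, 0 <= x <= 1 -> is_derive w1 x (w2 x))
  (Hd3 : forall x, 0 <= x <= 1 -> is_derive w2 x (w3 x))
  (Hw1_0 : w1 0 > 1) (Hw1_1 : w1 1 > 1)
  (Hw3 : forall x, 0 <= x <= 1 -> w3 x > 0) :
  (exists mu, is_max_ratio w mu) /\
  (forall mu, is_max_ratio w mu ->
     mu > 1 /\
     exists! p, 0 < p < 1 /\ mu * w p = p).
Proof.
  assert (Wpos : forall p, 0 < p <= 1 -> 0 < w p).
  { intros p Hp. rewrite <- Hw0. apply Hincr; lra. }
  split; [exact (max_ratio_exists w w1 Wpos Hw0 Hw1 Hd1 Hw1_0)|].
  intros mu Hmax.
  split; [exact (max_ratio_gt_1 w w1 Wpos Hw1 Hd1 Hw1_1 mu Hmax)|].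
  destruct (max_ratio_fixed_point_exists w w1 Wpos Hw1 Hd1 Hw1_1 mu Hmax) as [p Hp].
  exists p. split; [exact Hp|].
  intros q Hq.
  apply (max_ratio_fixed_point_unique w w1 w2 w3 Wpos Hw0 Hw1 Hd1 Hd2 Hd3 Hw1_1 Hw3 mu);
    tauto.
Qed.
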